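(* Let $(E,\mathcal{L},g)$ be a uniform affine oriented matroid with $|E|>1$ such that every maximal element of $\mathcal{L}^{++}$ is a tope of $\mathcal{L}$ and $X\backslash g\ne0$ for all $X\in\mathcal{L}^+$. Let $X\in\mathcal{L}^{++}$. Then a tope $T$ of $\mathcal{L}$ with $T>X$ lies in $\mathcal{C}_X$ if and only if $T\backslash g$ is a tope in $\mathcal{D}_X$. Moreover the map $r:\mathcal{C}_X\to\mathcal{D}_X$, $r(T)=T\backslash g$, is a bijection, with inverse $h$ given by $h(T)_g=+$ and $h(T)_e=T_e$ for $e\neq g$.
   Context: An oriented matroid $(E,\mathcal{L})$ is given by covectors $\mathcal{L}\subseteq\{+,-,0\}^E$ satisfying the standard covector axioms, ordered componentwise by $0<+$, $0<-$; topes are maximal covectors. Uniform: the underlying matroid (flats $z(X)=\{e:X_e=0\}$) of rank $r$ has every $r$-subset of $E$ as a basis. Affine oriented matroid $(E,\mathcal{L},g)$: $g\in E$ a non-loop; $\mathcal{L}^+=\{X\in\mathcal{L}:X_g=+\}$; bounded complex $\mathcal{L}^{++}=\{X\in\mathcal{L}^+:\ \text{all } 0\neq Y\le X \text{ in } \mathcal{L} \text{ have } Y_g=+\}$. $X\backslash g$ is the restriction of $X$ to $E\setminus\{g\}$; contraction $\mathcal{L}/g=\{Y\backslash g: Y\in\mathcal{L}, Y_g=0\}$. For $X\in\mathcal{L}^{++}$: $\mathcal{C}_X$ is the set of topes $T$ of $\mathcal{L}$ with $T>X$ and $T\notin\mathcal{L}^{++}$; $\mathcal{D}_X$ is the set of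 topes $T$ of $\mathcal{L}/g$ with $T_e=X_e$ for all $e\in\operatorname{supp}(X)\setminus\{g\}$ (equivalently $T\ge X\backslash g$). *)

From mathcomp Require Import all_boot.
Set Implicit Arguments. Unset Strict Implicit. Unset Printing Implicit Defensive.

(* Signs: None = 0, Some true = +, Some false = - *)
Notation sign := (option bool).
Notation s0 := (@None bool).
Notation sP := (Some true).
Notation sM := (Some false).

Section OM.
Variable E : finType.

Definition svec := {ffun E -> sign}.

Definition szero : svec := [ffun _ => s0].
Definition sneg (X : svec) : svec := [ffun e => omap negb (X e)].
Definition scomp (X Y : svec) : svec :=
  [ffun e => if X e is Some b then Some b else Y e].
Definition ssep (X Y : svec) : {set E} :=
  [set e | (X e != s0) && (Y e == omap negb (X e))].
Definition sle (X Y : svec) : bool := [forall e, (X e == s0) || (X e == Y e)].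
Definition slt (X Y : svec) : bool := sle X Y && (X != Y).
Definition zset (X : svec) : {set E} := [set e | X e == s0].

Definition covector_axioms (L : {set svec}) : Prop :=
  [/\ szero \in L,
      (forall X, X \in L -> sneg X \in L),
      (forall X Y, X \in L -> Y \in L -> scomp X Y \in L) &
      (forall X Y e, X \in L -> Y \in L -> e \in ssep X Y ->
         exists2 Z, Z \in L & Z e = s0 /\
           (forall f, f \notin ssep X Y -> Z f = scomp X Y f))].

Definition tope (L : {set svec}) (T : svec) : Prop :=
  T \in L /\ (forall Y, Y \in L -> sle T Y -> Y = T).

(* underlying matroid: flats are z(X), closure = intersection of flats containing A *)
Definition om_closure (L : {set svec}) (A : {set E}) : {set E} :=
  \bigcap_(X in L | A \subset zset X) zset X.
Definition om_indep (L : {set svec}) (A : {set E}) : bool :=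
  [forall a in A, a \notin om_closure L (A :\ a)].
Definition om_basis (L : {set svec}) (B : {set E}) : Prop :=
  om_indep L B /\ (forall B' : {set E}, B \proper B' -> ~~ om_indep L B').
Definition om_uniform (L : {set svec}) : Prop :=
  exists r, r <= #|E| /\ (forall B : {set E}, #|B| = r -> om_basis L B).

Definition nonloop (L : {set svec}) (g : E) : Prop := exists2 X, X \in L & X g != s0.

Definition Lplus (L : {set svec}) (g : E) : {set svec} := [set X in L | X g == sP].
Definition Lpp (L : {set svec}) (g : E) : {set svec} :=
  [set X in Lplus L g | [forall Y in L, (Y != szero) ==> sle Y X ==> (Y g == sP)]].
Definition maximal_in (S : {set svec}) (X : svec) : Prop :=
  X \in S /\ (forall Y, Y \in S -> sle X Y -> Y = X).

End OM.

Definition Eg (E : finType) (g : E) := {x : E | x != g}.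

Section Del.
Variables (E : finType) (g : E).
Definition sdel (X : svec E) : svec (Eg g) := [ffun e => X (val e)].
Definition contr (L : {set svec E}) : {set svec (Eg g)} :=
  [set sdel Y | Y in L & Y g == s0].
Definition hext (T : svec (Eg g)) : svec E :=
  [ffun e => if insub e is Some e' then T e' else sP].

(* C_X and D_X, as predicates (tope is Prop-valued) *)
Definition CX (L : {set svec E}) (X : svec E) (T : svec E) : Prop :=
  [/\ tope L T, slt X T & T \notin Lpp L g].
Definition DX (L : {set svec E}) (X : svec E) (T : svec (Eg g)) : Prop :=
  tope (contr L) T /\
  (forall e : Eg g, X (val e) != s0 -> T e = X (val e)).
End Del.
Arguments sdel {E} g X.
Arguments contr {E} g L.
Arguments hext {E} g T.
Arguments CX {E} g L X T.
Arguments DX {E} g L X T.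

From mathcomp Require Import all_boot.
Set Implicit Arguments. Unset Strict Implicit. Unset Printing Implicit Defensive.

(* In a uniform oriented matroid a nonzero covector W with W_e = 0 is complemented
   by a covector V with V_e <> 0 that vanishes on the other zeros of W: extend z(W)
   to a basis containing e and use its independence.  Hence there are no loops, topes
   have full support, and below a tope T any nonzero covector Y with Y_g = 0 can be
   grown, one zero at a time (replace W by W o V), into a covector W <= T with
   z(W) = {g}.  Then T\g = W\g is a tope of L/g, so a tope T > X is unbounded exactly
   when T\g is a tope of L/g.  Conversely, a tope T of L/g agreeing with X is Y\g for
   some Y in L with Y_g = 0; then h(T) = X o Y is a covector, a tope because nonzero
   topes of L/g have full support, and unbounded because it lies above Y. *)

Lemma exists_subset_card (T : finType) (A : {set T}) n :
  n <= #|A| -> exists2 B : {set T}, B \subset A & #|B| = n.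
Proof.
case/card_geqP=> s [uniq_s <- sA]; exists [set x in s].
  by apply/subsetP=> x; rewrite inE; exact: sA.
by rewrite cardsE; apply/card_uniqP.
Qed.

Lemma exists_superset_card (T : finType) (A : {set T}) n :
  #|A| <= n <= #|T| -> exists2 B : {set T}, A \subset B & #|B| = n.
Proof.
case/andP=> leAn lenT.
have [C sCA cardC] : exists2 C : {set T}, C \subset ~: A & #|C| = n - #|A|.
  by apply: exists_subset_card; rewrite -(leq_add2l #|A|) cardsC subnKC.
exists (A :|: C); first exact: subsetUl.
have AC0 : A :&: C = set0.
  apply/setP=> x; rewrite !inE; apply/negP=> /andP[xA /(subsetP sCA)].
  by rewrite inE xA.
by rewrite cardsU AC0 cards0 subn0 cardC subnKC.
Qed.

Section SignVectors.
Variable E : finType.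
Implicit Types X Y W : svec E.

Lemma sleP X Y : reflect (forall e, X e != s0 -> Y e = X e) (sle X Y).
Proof.
apply: (iffP forallP) => [XY e | XY e]; first by case/orP: (XY e) => /eqP ->.
by case: (eqVneq (X e) s0) => [-> //|/XY ->]; rewrite eqxx orbT.
Qed.

Lemma sle_full_eq X Y : (forall e, X e != s0) -> sle X Y -> Y = X.
Proof. by move=> Xfull /sleP XY; apply/ffunP => e; exact: XY. Qed.

Lemma sle_scomp X Y : sle X (scomp X Y).
Proof. by apply/sleP => e; rewrite ffunE; case: (X e). Qed.

Lemma scomp_sle X Y : sle X Y -> scomp X Y = Y.
Proof.
move=> /sleP XY; apply/ffunP => e; rewrite ffunE.
by case Xe: (X e) => [b|] //; rewrite XY Xe.
Qed.

Lemma zset_scomp X Y : zset (scomp X Y) = zset X :&: zset Y.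
Proof. by apply/setP => e; rewrite !inE ffunE; case: (X e). Qed.

Lemma svec_neq0P W : reflect (exists e, W e != s0) (W != szero E).
Proof.
apply: (iffP idP) => [Wnz | [e We]]; last by apply: contraNneq We => ->; rewrite ffunE.
apply/existsP; apply: contraR Wnz => /existsPn W0.
by apply/eqP/ffunP => e; rewrite ffunE; apply/eqP; rewrite -[_ == _]negbK.
Qed.

End SignVectors.

Section Covectors.
Variables (E : finType) (L : {set svec E}).
Hypothesis covL : covector_axioms L.
Implicit Types X Y V W Z : svec E.

Lemma scomp_in X Y : X \in L -> Y \in L -> scomp X Y \in L.
Proof. by case: covL => _ _ + _; apply. Qed.

Lemma sign_adjust V x s : V \in L -> V x != s0 -> s != s0 ->
  exists2 V', V' \in L & V' x = s /\ zset V' = zset V.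
Proof.
case: covL => _ negL _ _ VL Vx s_nz.
have [Vs | Vs] := eqVneq (V x) s; first by exists V.
exists (sneg V); first exact: negL.
split; last by apply/setP => y; rewrite !inE ffunE; case: (V y).
by rewrite ffunE; move: Vx Vs s_nz; case: (V x) => [[]|] //; case: s => [[]|].
Qed.

Lemma eliminate_at W V f : W \in L -> V \in L -> W f != s0 -> V f != s0 ->
  exists2 Z, Z \in L & Z f = s0 /\ zset W :&: zset Z = zset W :&: zset V.
Proof.
move=> WL VL Wf Vf.
have [V' V'L [V'f zV']] : exists2 V', V' \in L & V' f = omap negb (W f) /\ zset V' = zset V.
  by apply: sign_adjust => //; case: (W f) Wf.
have fsep : f \in ssep W V' by rewrite inE Wf V'f eqxx.
case: covL => _ _ _ /(_ W V' f WL V'L fsep) [Z ZL [Zf ZWV']].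
exists Z => //; split => //; apply/setP => y; rewrite -zV' !inE.
case Wy: (W y == s0) => //=; rewrite ZWV' ?ffunE ?(eqP Wy) //.
by rewrite inE (eqP Wy).
Qed.

Lemma om_closurePn (A : {set E}) x :
  reflect (exists2 X, X \in L & A \subset zset X /\ X x != s0) (x \notin om_closure L A).
Proof.
apply: (iffP idP) => [notcl | [X XL [AX Xx]]]; last first.
  by apply/bigcapP => /(_ X); rewrite XL AX inE => /(_ isT); apply/negP.
have /existsP[X /and3P[XL AX Xx]] : [exists X, [&& X \in L, A \subset zset X & X x != s0]].
  apply: contraR notcl => /existsPn noX; apply/bigcapP => X /andP[XL AX].
  by move: (noX X); rewrite XL AX inE negbK.
by exists X.
Qed.

Lemma om_indepU1 (B : {set E}) W f :
  om_indep L B -> W \in L -> B \subset zset W -> W f != s0 -> om_indep L (f |: B).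
Proof.
move=> indB WL BW Wf; have fB : f \notin B by apply: contra Wf => /(subsetP BW); rewrite inE.
apply/forall_inP => a /setU1P [-> | aB].
  by rewrite setU1K //; apply/om_closurePn; exists W.
have /om_closurePn[V VL [BV Va]] := forall_inP indB a aB.
have -> : (f |: B) :\ a = f |: (B :\ a).
  apply/setP => y; rewrite !inE; case: eqP => // ->; rewrite orbF.
  by apply/esym/negbTE/eqP => af; rewrite -af aB in fB.
have [Vf | Vf] := eqVneq (V f) s0.
  by apply/om_closurePn; exists V; rewrite // subUset sub1set inE Vf.
have [Z ZL [Zf WZ]] := eliminate_at WL VL Wf Vf.
apply/om_closurePn; exists Z; rewrite // subUset sub1set inE Zf eqxx /=; split.
  apply: subset_trans (subsetIr (zset W) _); rewrite WZ subsetI BV andbT.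
  exact: subset_trans (subsetDl B [set a]) BW.
apply: contra Va => Za.
have : a \in zset W :&: zset Z by rewrite in_setI (subsetP BW) // inE Za.
by rewrite WZ !inE => /andP[].
Qed.

Lemma card_zset_lt r W : (forall B : {set E}, #|B| = r -> om_basis L B) ->
  W \in L -> W != szero E -> #|zset W| < r.
Proof.
move=> basesL WL /svec_neq0P[f Wf]; rewrite ltnNge; apply/negP.
case/exists_subset_card => B BW /basesL[indB maxB].
have fB : f \notin B by apply: contra Wf => /(subsetP BW); rewrite inE.
apply: (negP (maxB (f |: B) _)) (om_indepU1 indB WL BW Wf).
by rewrite properEcard subsetUr cardsU1 fB add1n ltnSn.
Qed.

Lemma full_tope T : T \in L -> (forall e, T e != s0) -> tope L T.
Proof. by move=> TL Tfull; split => // Y _; exact: sle_full_eq. Qed.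

Lemma tope_full T e : nonloop L e -> tope L T -> T e != s0.
Proof.
case=> V VL Ve [TL Tmax]; apply: contra Ve => /eqP Te.
by move: (Tmax _ (scomp_in TL VL) (sle_scomp T V)) => /ffunP/(_ e); rewrite ffunE Te => ->.
Qed.

Hypothesis uniL : om_uniform L.

Lemma uniform_extend W e : W \in L -> W != szero E -> W e = s0 ->
  exists2 V, V \in L & V e != s0 /\ zset W :\ e \subset zset V.
Proof.
case: uniL => r [rE basesL] WL Wnz We.
have /exists_superset_card[B WB /basesL[indB _]] : #|zset W| <= r <= #|E|.
  by rewrite rE ltnW ?(card_zset_lt basesL WL Wnz).
have eB : e \in B by rewrite (subsetP WB) // inE We.
have /om_closurePn[V VL [BV Ve]] := forall_inP indB e eB.
by exists V => //; split; last exact: subset_trans (setSD _ WB) BV.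
Qed.

Lemma uniform_nonloop g e : nonloop L g -> nonloop L e.
Proof.
case=> X XL Xg; have [Xe | Xe] := eqVneq (X e) s0; last by exists X.
have Xnz : X != szero E by apply/svec_neq0P; exists g.
by have [V VL [Ve _]] := uniform_extend XL Xnz Xe; exists V.
Qed.

Lemma covector_drop_zero W T e : W \in L -> W != szero E -> sle W T -> T e != s0 ->
  e \in zset W -> exists2 W', W' \in L & sle W' T /\ zset W' = zset W :\ e.
Proof.
move=> WL Wnz WT Te; rewrite inE => /eqP We.
have [V VL [Ve WV]] := uniform_extend WL Wnz We.
have [V' V'L [V'e zV']] := sign_adjust VL Ve Te.
have zW' : zset (scomp W V') = zset W :\ e.
  apply/setP => x; rewrite zset_scomp zV' in_setI in_setD1.
  have [-> | xe] := eqVneq x e; first by rewrite !inE (negbTE Ve) andbF.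
  by apply/andb_idr => xW; apply: (subsetP WV); rewrite in_setD1 xe.
exists (scomp W V'); first exact: scomp_in.
split => //; apply/sleP => x; rewrite ffunE; case Wx: (W x) => [b|] V'x.
  by rewrite -Wx (sleP _ _ WT) // Wx.
have : x \notin zset W :\ e by rewrite -zW' inE ffunE Wx.
by rewrite in_setD1 inE Wx eqxx andbT negbK => /eqP ->.
Qed.

Lemma covector_below_zset1 W T g : W \in L -> W != szero E -> sle W T ->
  (forall e, T e != s0) -> W g = s0 ->
  exists2 W', W' \in L & sle W' T /\ zset W' = [set g].
Proof.
move=> + + + Tfull; have [n] := ubnP #|zset W|; elim: n W => // n IH W cardW WL Wnz WT Wg.
have gW : g \in zset W by rewrite inE Wg.
have [zW1 | /set0Pn[e]] := eqVneq (zset W :\ g) set0.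
  by exists W => //; split; rewrite // -(setD1K gW) zW1 setU0.
rewrite in_setD1 => /andP[eg eW].
have [W' W'L [W'T zW']] := covector_drop_zero WL Wnz WT (Tfull e) eW.
apply: IH W'L _ W'T _.
- by rewrite zW'; rewrite (cardsD1 e) eW add1n ltnS in cardW.
- case/svec_neq0P: Wnz => f Wf; apply/svec_neq0P; exists f.
  apply: contra Wf => W'f; have : f \in zset W' by rewrite inE.
  by rewrite zW' !inE => /andP[].
- have : g \in zset W' by rewrite zW' in_setD1 eq_sym eg.
  by rewrite inE => /eqP.
Qed.

End Covectors.

Section Deletion.
Variables (E : finType) (g : E).
Implicit Types (L : {set svec E}) (X Y W : svec E) (T : svec (Eg g)).

Lemma sdel_szero : sdel g (szero E) = szero (Eg g).
Proof. by apply/ffunP => e; rewrite !ffunE. Qed.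

Lemma sdel_scomp X Y : sdel g (scomp X Y) = scomp (sdel g X) (sdel g Y).
Proof. by apply/ffunP => e; rewrite !ffunE. Qed.

Lemma sle_sdelP X T :
  reflect (forall e : Eg g, X (val e) != s0 -> T e = X (val e)) (sle (sdel g X) T).
Proof.
apply: (iffP (sleP _ _)) => XT e; first by move: (XT e); rewrite ffunE.
by rewrite ffunE; exact: XT.
Qed.

Lemma sle_sdel X Y : sle X Y -> sle (sdel g X) (sdel g Y).
Proof. by move=> /sleP XY; apply/sle_sdelP => e /XY; rewrite ffunE. Qed.

Lemma sle_of_sdel_eq Y W : Y g = s0 -> sdel g Y = sdel g W -> sle Y W.
Proof.
move=> Yg YW; apply/sleP => x; have [-> | xg] := eqVneq x g; first by rewrite Yg.
by move: YW => /ffunP/(_ (Sub x xg)); rewrite !ffunE /= => ->.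
Qed.

Lemma sdel_zset1 W Y : zset W = [set g] -> sle W Y -> sdel g W = sdel g Y.
Proof.
move=> zW /sleP WY; apply/ffunP => e; rewrite !ffunE WY //.
by apply: contra (valP e) => We; rewrite -in_set1 -zW inE.
Qed.

Lemma zset1_full W : zset W = [set g] -> forall e : Eg g, sdel g W e != s0.
Proof.
by move=> zW e; rewrite ffunE; apply: contra (valP e) => We; rewrite -in_set1 -zW inE.
Qed.

Lemma sdel_hext T : sdel g (hext g T) = T.
Proof. by apply/ffunP => e; rewrite !ffunE valK. Qed.

Lemma hext_sdel W : W g = sP -> hext g (sdel g W) = W.
Proof.
move=> Wg; apply/ffunP => x; rewrite ffunE.
by case: insubP => [e _ <- | /negPn/eqP ->]; rewrite ?ffunE.
Qed.

Lemma hext_full T : (forall e, T e != s0) -> forall x, hext g T x != s0.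
Proof. by move=> Tfull x; rewrite ffunE; case: insubP. Qed.

Lemma Lpp_sign L X : X \in Lpp L g -> X \in L /\ X g = sP.
Proof. by rewrite !inE => /andP[/andP[XL /eqP]]. Qed.

Lemma Lpp_sle_plus L X W : X \in Lpp L g -> sle X W -> W g = sP.
Proof. by case/Lpp_sign => _ Xg /sleP ->; rewrite Xg. Qed.

Lemma notin_Lpp L Y W :
  Y \in L -> Y != szero E -> sle Y W -> Y g = s0 -> W \notin Lpp L g.
Proof.
move=> YL Ynz YW Yg; rewrite inE negb_and; apply/orP; right.
by apply/forall_inPn; exists Y; rewrite // Ynz YW Yg.
Qed.

Lemma Lpp_witness L W : W \in Lplus L g -> W \notin Lpp L g ->
  exists2 Y, Y \in L & [/\ Y != szero E, sle Y W & Y g = s0].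
Proof.
move=> WLp; rewrite inE WLp => /forall_inPn[Y YL].
rewrite !negb_imply => /and3P[Ynz YW Yg]; exists Y => //; split => //.
move: WLp; rewrite inE => /andP[_ /eqP Wg].
have [// | Ygnz] := eqVneq (Y g) s0.
by move: Yg; rewrite -(sleP _ _ YW _ Ygnz) Wg.
Qed.

End Deletion.

Section AffineFaces.
Variables (E : finType) (L : {set svec E}) (g : E).
Hypotheses (covL : covector_axioms L) (uniL : om_uniform L).

Lemma contr_tope_full T :
  tope (contr g L) T -> T != szero (Eg g) -> forall e, T e != s0.
Proof.
case=> /imsetP[Y]; rewrite inE => /andP[YL /eqP Yg] -> Ymax Tnz e.
have Ynz : Y != szero E by apply: contraNneq Tnz => ->; rewrite sdel_szero.
apply/negP; rewrite ffunE => /eqP Ye.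
have [V VL [Ve YV]] := uniform_extend covL uniL YL Ynz Ye.
have : g \in zset V by rewrite (subsetP YV) // in_setD1 eq_sym (valP e) inE Yg.
rewrite inE => /eqP Vg.
have YVc : sdel g (scomp Y V) \in contr g L.
  by apply/imsetP; exists (scomp Y V) => //; rewrite inE scomp_in // ffunE Yg Vg.
move: (Ymax _ YVc (sle_sdel g (sle_scomp Y V))) => /ffunP/(_ e).
by rewrite !ffunE Ye => V0; rewrite V0 in Ve.
Qed.

Hypothesis nlg : nonloop L g.
Hypothesis del_neq0 : forall X, X \in Lplus L g -> sdel g X != szero (Eg g).
Variable X : svec E.
Hypothesis XLpp : X \in Lpp L g.

Lemma CX_DX T : CX g L X T -> DX g L X (sdel g T).
Proof.
case=> Ttop /andP[XT _] TnLpp.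
have TLp : T \in Lplus L g by rewrite inE Ttop.1 (Lpp_sle_plus XLpp XT).
have [Y YL [Ynz YT Yg]] := Lpp_witness TLp TnLpp.
have Tfull (e : E) : T e != s0 := tope_full covL (uniform_nonloop covL uniL e nlg) Ttop.
have [W WL [WT zW]] := covector_below_zset1 covL uniL YL Ynz YT Tfull Yg.
split; last exact/sle_sdelP/(sle_sdel g).
rewrite -(sdel_zset1 zW WT); apply: full_tope (zset1_full zW).
by apply/imsetP; exists W; rewrite // inE WL; have := set11 g; rewrite -zW inE.
Qed.

Lemma DX_CX T : tope L T -> slt X T -> DX g L X (sdel g T) -> CX g L X T.
Proof.
move=> Ttop XT [[/imsetP[Y + TY] _] _]; rewrite inE => /andP[YL /eqP Yg].
split => //; apply: notin_Lpp YL _ (sle_of_sdel_eq Yg (esym TY)) Yg.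
have TLp : T \in Lplus L g by rewrite inE Ttop.1 (Lpp_sle_plus XLpp (proj1 (andP XT))).
by apply: contraNneq (del_neq0 TLp) => Y0; rewrite TY Y0 sdel_szero.
Qed.

Lemma DX_hext T : DX g L X T -> CX g L X (hext g T).
Proof.
move=> [Ttop /sle_sdelP XT]; have [XL Xg] := Lpp_sign XLpp.
case/imsetP: (Ttop.1) => Y; rewrite inE => /andP[YL /eqP Yg] TY.
have Tnz : T != szero (Eg g).
  have /svec_neq0P[e Xe] : sdel g X != szero (Eg g) by apply: del_neq0; rewrite inE XL Xg.
  by apply/svec_neq0P; exists e; rewrite (sleP _ _ XT _ Xe).
have Ynz : Y != szero E by apply: contraNneq Tnz => Y0; rewrite TY Y0 sdel_szero.
have hT : hext g T = scomp X Y.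
  by rewrite -[T in LHS](scomp_sle XT) TY -sdel_scomp hext_sdel // ffunE Xg.
have YhT : sle Y (hext g T) by apply: sle_of_sdel_eq Yg _; rewrite sdel_hext TY.
have hTnLpp : hext g T \notin Lpp L g := notin_Lpp YL Ynz YhT Yg.
split => //.
- by apply: full_tope (hext_full (contr_tope_full Ttop Tnz)); rewrite hT scomp_in.
- by rewrite /slt hT sle_scomp /=; apply: contraTneq XLpp => ->; rewrite -hT.
Qed.

End AffineFaces.

Theorem lemma4p4 (E : finType) (L : {set svec E}) (g : E) :
  covector_axioms L -> om_uniform L -> nonloop L g -> 1 < #|E| ->
  (forall X, maximal_in (Lpp L g) X -> tope L X) ->
  (forall X, X \in Lplus L g -> sdel g X != szero (Eg g)) ->
  forall X, X \in Lpp L g ->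
  [/\ (forall T, tope L T -> slt X T -> (CX g L X T <-> DX g L X (sdel g T))),
      (forall T, CX g L X T -> DX g L X (sdel g T)),
      (forall T, DX g L X T -> CX g L X (hext g T)),
      (forall T, CX g L X T -> hext g (sdel g T) = T) &
      (forall T, DX g L X T -> sdel g (hext g T) = T)].
Proof.
move=> covL uniL nlg _ _ del_neq0 X XLpp.
split=> [T Ttop XT | T | T | T [_ /andP[XT _] _] | T _].
- by split; [exact: (CX_DX covL uniL nlg XLpp) | exact: (DX_CX del_neq0 XLpp Ttop XT)].
- exact: (CX_DX covL uniL nlg XLpp).
- exact: (DX_hext covL uniL del_neq0 XLpp).
- by rewrite hext_sdel // (Lpp_sle_plus XLpp XT).
- exact: sdel_hext.
Qed.
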